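(* Let $\langle E,\rightarrow\rangle$ be a computation in which some events are designated as local checkpoints, let $b$ be the conjunctive predicate that holds at a consistent cut iff, for every process, the last event of that process in the cut is a local checkpoint, and let $S$ be the slice of $\langle E,\rightarrow\rangle$ with respect to $b$. A set $X$ of local checkpoints can belong to the same consistent global snapshot (i.e., there is a non-trivial consistent cut of $\langle E,\rightarrow\rangle$ satisfying $b$ whose frontier contains $X$) if and only if every pair of (not necessarily distinct) elements of $X$ is consistent in $S$.
   Context: A computation is a directed graph $\langle E, \rightarrow\rangle$ whose vertices (events) are partitioned among processes, events on each process totally ordered, each process having an initial event (first) and final event (last), whose path relation contains Lamport's happened-before relation, with all initial events in one strongly connected component and all final events in one. $\top$ is the set of final events and $\mathrm{succ}(e)$ the successor of $e$ on its process. A vertex subset $C$ of a directed graph is a consistent cut if for every edge $(u,v)$, $v\in C$ implies $u\in C$. The frontier of a consistent cut $C$ is $\{e\in C \mid e\notin\top \Rightarrow \mathrm{succ}(e)\notin C\}$. Two events (possibly equal) are consistent in a graph if both belong to the frontier of some consistent cut of that graph. A conjunctive predicate is a conjunction of local predicates, each depending on one process and evaluated at the last event of that process in the cut. The slice with respect to $b$ is a directed graph on $E$ whose consistent cuts include every consistent cut of the computation satisfying $b$ and which has the fewest consistent cuts among all such graphs. *)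

From mathcomp Require Import all_boot.
Set Implicit Arguments. Unset Strict Implicit. Unset Printing Implicit Defensive.

(* A computation over a finite set of events [E] and processes [P]:
   [proc e] is the process of event [e], [pidx e] its position (0-based) on
   that process, [msg] the message relation, [edge] the graph edges. *)

Definition psucc (P E : finType) (proc : E -> P) (pidx : E -> nat) : rel E :=
  fun e f => (proc f == proc e) && (pidx f == (pidx e).+1).

Definition is_final (P E : finType) (proc : E -> P) (pidx : E -> nat) (e : E) : bool :=
  [forall f, ~~ psucc proc pidx e f].

Definition is_initial (E : finType) (pidx : E -> nat) (e : E) : bool :=
  pidx e == 0.

Definition hb (P E : finType) (proc : E -> P) (pidx : E -> nat) (msg : rel E) : rel E :=
  connect (fun x y => psucc proc pidx x y || msg x y).

Definition is_computation (P E : finType) (proc : E -> P) (pidx : E -> nat)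
    (msg : rel E) (edge : rel E) : Prop :=
  [/\ [/\
      (forall e f, proc e = proc f -> pidx e = pidx f -> e = f),
      (forall e j, j < pidx e -> exists2 f, proc f = proc e & pidx f = j)
      &
      (forall p, exists e, proc e = p)],
      (forall e f, hb proc pidx msg e f -> connect edge e f),
      (forall e f, is_initial pidx e -> is_initial pidx f ->
                   connect edge e f)
    &
      (forall e f, is_final proc pidx e -> is_final proc pidx f ->
                   connect edge e f)].

Definition consistent_cut (E : finType) (g : rel E) (C : {set E}) : bool :=
  [forall u, forall v, g u v ==> (v \in C) ==> (u \in C)].

Definition cuts (E : finType) (g : rel E) : {set {set E}} :=
  [set C : {set E} | consistent_cut g C].

Definition frontier (P E : finType) (proc : E -> P) (pidx : E -> nat)
    (C : {set E}) : {set E} :=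
  [set e in C | [forall f, psucc proc pidx e f ==> (f \notin C)]].

Definition consistent_in (P E : finType) (proc : E -> P) (pidx : E -> nat)
    (g : rel E) (e f : E) : Prop :=
  exists C : {set E}, [/\ consistent_cut g C,
                          e \in frontier proc pidx C & f \in frontier proc pidx C].

Definition last_in (P E : finType) (proc : E -> P) (pidx : E -> nat)
    (C : {set E}) (p : P) (e : E) : Prop :=
  [/\ e \in C, proc e = p &
      forall f, f \in C -> proc f = p -> pidx f <= pidx e].

Definition sat_b (P E : finType) (proc : E -> P) (pidx : E -> nat)
    (ckpt : {set E}) (C : {set E}) : Prop :=
  forall p, exists2 e, last_in proc pidx C p e & e \in ckpt.

Definition is_slice (P E : finType) (proc : E -> P) (pidx : E -> nat)
    (edge : rel E) (ckpt : {set E}) (S : rel E) : Prop :=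
  let incl (G : rel E) := forall C : {set E}, consistent_cut edge C ->
         sat_b proc pidx ckpt C -> consistent_cut G C in
  incl S /\ (forall G : rel E, incl G -> #|cuts S| <= #|cuts G|).

Definition nontrivial (E : finType) (C : {set E}) : bool :=
  (C != set0) && (C != setT).

From mathcomp Require Import all_boot.
Set Implicit Arguments. Unset Strict Implicit. Unset Printing Implicit Defensive.

(* The consistent cuts satisfying b, together with the two trivial cuts, form a
   lattice of sets L: for conjunctive predicates the last events of the meet
   (resp. join) of two such cuts are pointwise the earlier (resp. later) of
   their last events.  Any lattice of sets L is the lattice of consistent cuts
   of the graph with an edge u -> v iff every member of L containing v contains
   u, so minimality of the slice forces cuts S = L.  Given pairwise witnesses
   in L, the union over x in X of the least member of L having x on its
   frontier has all of X on its frontier; it contains a checkpoint but not its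
   successor, so it is non-trivial and therefore satisfies b. *)

Section ConsistentCuts.

Variables (T : finType) (g : rel T).

Lemma consistent_cutP (C : {set T}) :
  reflect (forall u v, g u v -> v \in C -> u \in C) (consistent_cut g C).
Proof.
apply: (iffP forallP) => [Hc u v Huv Hv | Hc u].
  by move: (forallP (Hc u) v); rewrite Huv Hv.
by apply/forallP => v; apply/implyP => Huv; apply/implyP; apply: Hc.
Qed.

Lemma consistent_cut_connect (C : {set T}) u v :
  consistent_cut g C -> connect g u v -> v \in C -> u \in C.
Proof.
move=> /consistent_cutP Hc /connectP [p Hp ->] {v}.
elim: p u Hp => [|w p IH] u //= /andP [Huw Hp] Hl.
exact: Hc Huw (IH w Hp Hl).
Qed.

Lemma consistent_cut0 : consistent_cut g set0.
Proof. by apply/consistent_cutP => u v _; rewrite inE. Qed.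

Lemma consistent_cutT : consistent_cut g setT.
Proof. by apply/consistent_cutP => u v _; rewrite inE. Qed.

Lemma consistent_cutI (A B : {set T}) :
  consistent_cut g A -> consistent_cut g B -> consistent_cut g (A :&: B).
Proof.
move=> /consistent_cutP HA /consistent_cutP HB.
apply/consistent_cutP => u v Huv; rewrite !inE => /andP [HvA HvB].
by rewrite (HA u v) ?(HB u v).
Qed.

Lemma consistent_cutU (A B : {set T}) :
  consistent_cut g A -> consistent_cut g B -> consistent_cut g (A :|: B).
Proof.
move=> /consistent_cutP HA /consistent_cutP HB.
apply/consistent_cutP => u v Huv; rewrite !inE => /orP [Hv | Hv].
  by rewrite (HA u v).
by rewrite (HB u v) ?orbT.
Qed.

End ConsistentCuts.

Section SetLattice.

Variables (T : finType) (L : {set {set T}}).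
Hypotheses (L0 : set0 \in L) (LT : setT \in L).
Hypothesis LI : {in L &, forall A B, A :&: B \in L}.
Hypothesis LU : {in L &, forall A B, A :|: B \in L}.

Lemma bigcap_lattice (I : finType) (Q : pred I) (F : I -> {set T}) :
  (forall i, Q i -> F i \in L) -> \bigcap_(i | Q i) F i \in L.
Proof. by move=> HF; apply: (big_ind (fun A => A \in L)) => // A B; apply: LI. Qed.

Lemma bigcup_lattice (I : finType) (Q : pred I) (F : I -> {set T}) :
  (forall i, Q i -> F i \in L) -> \bigcup_(i | Q i) F i \in L.
Proof. by move=> HF; apply: (big_ind (fun A => A \in L)) => // A B; apply: LU. Qed.

Definition lattice_rel : rel T :=
  fun u v => [forall D in L, (v \in D) ==> (u \in D)].

Lemma cuts_lattice_rel : cuts lattice_rel = L.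
Proof.
apply/setP => D; rewrite inE; apply/idP/idP => [/consistent_cutP HD | HD].
  have -> : D = \bigcup_(v in D) \bigcap_(F in L | v \in F) F.
    apply/setP => u; apply/idP/bigcupP => [Hu | [v Hv /bigcapP Hu]].
      by exists u => //; apply/bigcapP => F /andP [].
    apply: HD Hv; apply/forallP => F; apply/implyP => HF; apply/implyP => HvF.
    by apply: Hu; rewrite HF HvF.
  by apply: bigcup_lattice => v _; apply: bigcap_lattice => F /andP [].
by apply/consistent_cutP => u v /forall_inP /(_ D HD) /implyP.
Qed.

Variables (P : finType) (proc : T -> P) (pidx : T -> nat).

Lemma lattice_common_frontier (X : {set T}) :
  (forall x y, x \in X -> y \in X ->
     exists2 D, D \in L & (x \in frontier proc pidx D) && (y \in frontier proc pidx D)) ->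
  exists2 C, C \in L & X \subset frontier proc pidx C.
Proof.
move=> Hwit.
pose least x := \bigcap_(D in L | x \in frontier proc pidx D) D.
exists (\bigcup_(x in X) least x).
  by apply: bigcup_lattice => x _; apply: bigcap_lattice => D /andP [].
apply/subsetP => x Hx; rewrite inE; apply/andP; split.
  apply/bigcupP; exists x => //; apply/bigcapP => D /andP [_].
  by rewrite inE => /andP [].
apply/forallP => f; apply/implyP => Hxf; apply/bigcupP => [[z Hz /bigcapP Hf]].
have [D HD /andP [HzD HxD]] := Hwit z x Hz Hx.
move: HxD; rewrite inE => /andP [_ /forallP /(_ f)].
by rewrite Hxf Hf ?HD.
Qed.

End SetLattice.

Section Computation.

Variables (P E : finType) (proc : E -> P) (pidx : E -> nat) (msg edge : rel E).
Hypothesis Hcomp : is_computation proc pidx msg edge.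

Lemma hb_proc_le e f :
  proc e = proc f -> pidx e <= pidx f -> hb proc pidx msg e f.
Proof.
case: Hcomp => [[Hinj Hcont _] _ _ _] Hp Hle.
have [k Hk] : exists k, pidx f = pidx e + k by exists (pidx f - pidx e); rewrite subnKC.
elim: k f Hp Hk {Hle} => [|k IH] f Hp Hk.
  by rewrite (Hinj e f Hp); [exact: connect0 | rewrite Hk addn0].
have Hlt : pidx e + k < pidx f by rewrite Hk addnS.
have [h Hh Hhk] := Hcont f _ Hlt.
apply: connect_trans (IH h _ Hhk) (connect1 _); first by rewrite Hh.
by rewrite /psucc Hh eqxx Hk Hhk addnS eqxx.
Qed.

Lemma consistent_cut_proc_le (C : {set E}) e f :
  consistent_cut edge C -> f \in C -> proc e = proc f -> pidx e <= pidx f ->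
  e \in C.
Proof.
case: Hcomp => _ Hhb _ _ HC Hf Hp Hle.
exact: consistent_cut_connect HC (Hhb _ _ (hb_proc_le Hp Hle)) Hf.
Qed.

Lemma last_inI (A B : {set E}) p e1 e2 :
  consistent_cut edge B -> last_in proc pidx A p e1 -> last_in proc pidx B p e2 ->
  pidx e1 <= pidx e2 -> last_in proc pidx (A :&: B) p e1.
Proof.
move=> HB [He1 Hp1 Hm1] [He2 Hp2 _] Hle; split=> // [|f].
  by rewrite inE He1 (consistent_cut_proc_le HB He2) // Hp1 Hp2.
by rewrite inE => /andP [Hf _]; apply: Hm1.
Qed.

Lemma last_inU (A B : {set E}) p e1 e2 :
  last_in proc pidx A p e1 -> last_in proc pidx B p e2 ->
  pidx e1 <= pidx e2 -> last_in proc pidx (A :|: B) p e2.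
Proof.
move=> [_ _ Hm1] [He2 Hp2 Hm2] Hle; split=> [|//|f].
  by rewrite inE He2 orbT.
rewrite inE => /orP [Hf | Hf] Hpf; last exact: Hm2.
exact: leq_trans (Hm1 f Hf Hpf) Hle.
Qed.

Variable ckpt : {set E}.

Lemma sat_bI (A B : {set E}) :
  consistent_cut edge A -> consistent_cut edge B ->
  sat_b proc pidx ckpt A -> sat_b proc pidx ckpt B ->
  sat_b proc pidx ckpt (A :&: B).
Proof.
move=> HA HB sA sB p.
have [e1 He1 Hk1] := sA p; have [e2 He2 Hk2] := sB p.
case: (leqP (pidx e1) (pidx e2)) => Hle.
  by exists e1 => //; apply: last_inI He1 He2 Hle.
by exists e2 => //; rewrite setIC; apply: last_inI He2 He1 (ltnW Hle).
Qed.

Lemma sat_bU (A B : {set E}) :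
  sat_b proc pidx ckpt A -> sat_b proc pidx ckpt B ->
  sat_b proc pidx ckpt (A :|: B).
Proof.
move=> sA sB p.
have [e1 He1 Hk1] := sA p; have [e2 He2 Hk2] := sB p.
case: (leqP (pidx e1) (pidx e2)) => Hle.
  by exists e2 => //; apply: last_inU He1 He2 Hle.
by exists e1 => //; rewrite setUC; apply: last_inU He2 He1 (ltnW Hle).
Qed.

Definition sat_bb (C : {set E}) : bool :=
  [forall p, [exists e, [&& e \in ckpt, e \in C, proc e == p &
                            [forall f in C, (proc f == p) ==> (pidx f <= pidx e)]]]].

Lemma sat_bP (C : {set E}) : reflect (sat_b proc pidx ckpt C) (sat_bb C).
Proof.
apply: (iffP forallP) => H p.
  have /existsP [e /and4P [He HeC /eqP Hp /forall_inP Hm]] := H p.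
  by exists e => //; split=> // f Hf Hpf; move: (Hm f Hf); rewrite Hpf eqxx.
have [e [HeC Hp Hm] He] := H p.
apply/existsP; exists e; rewrite He HeC Hp eqxx /=.
by apply/forall_inP => f Hf; apply/implyP => /eqP; apply: Hm.
Qed.

Definition b_lattice : {set {set E}} :=
  [set C | [|| C == set0, C == setT | consistent_cut edge C && sat_bb C]].

Lemma b_lattice0 : set0 \in b_lattice.
Proof. by rewrite inE eqxx. Qed.

Lemma b_latticeT : setT \in b_lattice.
Proof. by rewrite inE eqxx orbT. Qed.

Lemma in_b_lattice (C : {set E}) :
  consistent_cut edge C -> sat_b proc pidx ckpt C -> C \in b_lattice.
Proof. by move=> cC /sat_bP sC; rewrite inE cC sC !orbT. Qed.

Lemma b_latticeP (C : {set E}) : C \in b_lattice ->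
  [\/ C = set0, C = setT | consistent_cut edge C /\ sat_b proc pidx ckpt C].
Proof.
rewrite inE => /or3P [/eqP -> | /eqP -> | /andP [cC /sat_bP sC]];
  [exact: Or31 | exact: Or32 | exact: Or33].
Qed.

Lemma b_latticeI : {in b_lattice &, forall A B, A :&: B \in b_lattice}.
Proof.
move=> A B /b_latticeP [-> | -> | [cA sA]] /b_latticeP [-> | -> | [cB sB]];
  rewrite ?(set0I, setI0, setTI, setIT, b_lattice0, b_latticeT) //;
  apply: in_b_lattice => //; [exact: consistent_cutI | exact: sat_bI].
Qed.

Lemma b_latticeU : {in b_lattice &, forall A B, A :|: B \in b_lattice}.
Proof.
move=> A B /b_latticeP [-> | -> | [cA sA]] /b_latticeP [-> | -> | [cB sB]];
  rewrite ?(set0U, setU0, setTU, setUT, b_lattice0, b_latticeT) //;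
  apply: in_b_lattice => //; [exact: consistent_cutU | exact: sat_bU].
Qed.

Lemma cuts_slice (S : rel E) :
  is_slice proc pidx edge ckpt S -> cuts S = b_lattice.
Proof.
case=> Hincl Hmin.
have cuts_rel := cuts_lattice_rel b_lattice0 b_latticeT b_latticeI b_latticeU.
have Hsub : b_lattice \subset cuts S.
  apply/subsetP => C /b_latticeP [-> | -> | [cC sC]]; rewrite inE.
  - exact: consistent_cut0.
  - exact: consistent_cutT.
  - exact: Hincl.
apply/esym/eqP; rewrite eqEcard Hsub -cuts_rel /=.
apply: Hmin => C cC sC.
by have := in_b_lattice cC sC; rewrite -{1}cuts_rel inE.
Qed.

Lemma slice_common_frontier (S : rel E) (X : {set E}) :
  is_slice proc pidx edge ckpt S ->
  (forall x y, x \in X -> y \in X -> consistent_in proc pidx S x y) ->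
  exists2 C, C \in b_lattice & X \subset frontier proc pidx C.
Proof.
move=> HS Hcons.
apply: (lattice_common_frontier b_lattice0 b_latticeT b_latticeI b_latticeU).
move=> x y Hx Hy; have [D [cD HxD HyD]] := Hcons x y Hx Hy.
by exists D; [rewrite -(cuts_slice HS) inE | rewrite HxD HyD].
Qed.

End Computation.

Theorem theorem13 (P E : finType) (proc : E -> P) (pidx : E -> nat)
    (msg edge : rel E) (ckpt : {set E}) (S : rel E)
    (Hcomp : is_computation proc pidx msg edge)
    (Hckpt : forall e, e \in ckpt -> ~~ is_final proc pidx e)
    (HS : is_slice proc pidx edge ckpt S)
    (X : {set E}) (HX0 : X != set0) (HX : X \subset ckpt) :
  (exists C : {set E}, [/\ consistent_cut edge C, nontrivial C,
                           sat_b proc pidx ckpt C & X \subset frontier proc pidx C])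
  <-> (forall x y, x \in X -> y \in X -> consistent_in proc pidx S x y).
Proof.
split=> [[C [cC _ sC /subsetP HXC]] x y Hx Hy | Hcons].
  by case: HS => Hincl _; exists C; split; [apply: Hincl | apply: HXC | apply: HXC].
have [C /b_latticeP HC HXC] := slice_common_frontier Hcomp HS Hcons.
have [x0 Hx0] := set0Pn X HX0.
have /forallPn [f0] := Hckpt x0 (subsetP HX x0 Hx0); rewrite negbK => Hf0.
have /setIdP [Hx0C /forallP /(_ f0)] := subsetP HXC x0 Hx0; rewrite Hf0 /= => Hf0C.
have C0 : C != set0 by apply/set0Pn; exists x0.
have CT : C != setT by apply: contraNneq Hf0C => ->; apply: in_setT.
case: HC C0 CT => [-> | -> | [cC sC] C0 CT]; rewrite ?eqxx //.
by exists C; rewrite /nontrivial C0 CT.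
Qed.
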